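(* In a soft aura topological space $(X,\widetilde{\tau},\mathfrak{a}_E,E)$, soft $\mathfrak{a}$-$T_1$ and soft $\mathfrak{a}$-$T_2$ are equivalent.
   Context: For a nonempty set $X$ and nonempty parameter set $E$, a soft set is a map $F:E\to\mathcal{P}(X)$, written $(F,E)$. A soft topology $\widetilde{\tau}$ is a family of soft sets containing the soft sets with all values $\emptyset$ and all values $X$, closed under arbitrary parameterwise unions and finite parameterwise intersections. A soft scope function is a map $\mathfrak{a}_E:X\to\widetilde{\tau}$ with $x\in\mathfrak{a}_E(x)(e)$ for all $x\in X,e\in E$; $(X,\widetilde{\tau},\mathfrak{a}_E,E)$ is a soft aura topological space. It is soft $\mathfrak{a}$-$T_1$ if for every pair of distinct $x,y\in X$ and every $e\in E$, $y\notin\mathfrak{a}_E(x)(e)$ and $x\notin\mathfrak{a}_E(y)(e)$; it is soft $\mathfrak{a}$-$T_2$ if for every pair of distinct $x,y\in X$ and every $e\in E$, $\mathfrak{a}_E(x)(e)\cap\mathfrak{a}_E(y)(e)=\emptyset$. *)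

Definition soft_set (X E : Type) : Type := E -> X -> Prop.

Definition soft_null {X E : Type} : soft_set X E := fun _ _ => False.
Definition soft_absolute {X E : Type} : soft_set X E := fun _ _ => True.

Definition soft_Union {X E : Type} (S : soft_set X E -> Prop) : soft_set X E :=
  fun e x => exists F, S F /\ F e x.

Definition soft_inter {X E : Type} (F G : soft_set X E) : soft_set X E :=
  fun e x => F e x /\ G e x.

Definition soft_topology {X E : Type} (tau : soft_set X E -> Prop) : Prop :=
  tau soft_null /\ tau soft_absolute /\
  (forall S : soft_set X E -> Prop, (forall F, S F -> tau F) -> tau (soft_Union S)) /\
  (forall F G, tau F -> tau G -> tau (soft_inter F G)).

Definition soft_scope {X E : Type} (tau : soft_set X E -> Prop)
  (a : X -> soft_set X E) : Prop :=
  (forall x, tau (a x)) /\ (forall x e, a x e x).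

Definition soft_a_T1 {X E : Type} (a : X -> soft_set X E) : Prop :=
  forall x y : X, x <> y -> forall e : E, ~ a x e y /\ ~ a y e x.

Definition soft_a_T2 {X E : Type} (a : X -> soft_set X E) : Prop :=
  forall x y : X, x <> y -> forall e : E, forall z : X, ~ (a x e z /\ a y e z).

From Stdlib Require Import Classical.

(* A common point z of a(x)(e) and a(y)(e) differs from x or from y, and then
   lies in the scope of the other point, against T1; conversely, since each
   point lies in its own scope, y ∈ a(x)(e) makes y a common point of a(x)(e)
   and a(y)(e). *)

Lemma soft_a_T1_T2 {X E : Type} (a : X -> soft_set X E) :
  soft_a_T1 a -> soft_a_T2 a.
Proof.
  intros hT1 x y hxy e z [hxz hyz].
  destruct (classic (x = z)) as [<- | hneq].
  - exact (proj2 (hT1 x y hxy e) hyz).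
  - exact (proj1 (hT1 x z hneq e) hxz).
Qed.

Lemma soft_a_T2_T1 {X E : Type} (a : X -> soft_set X E) :
  (forall x e, a x e x) -> soft_a_T2 a -> soft_a_T1 a.
Proof.
  intros hrefl hT2 x y hxy e; split.
  - intro hxy_e. exact (hT2 x y hxy e y (conj hxy_e (hrefl y e))).
  - intro hyx_e. exact (hT2 x y hxy e x (conj (hrefl x e) hyx_e)).
Qed.

Theorem proposition6p3 (X E : Type) (hX : inhabited X) (hE : inhabited E)
  (tau : soft_set X E -> Prop) (a : X -> soft_set X E)
  (htau : soft_topology tau) (ha : soft_scope tau a) :
  soft_a_T1 a <-> soft_a_T2 a.
Proof.
  destruct ha as [_ hrefl].
  split.
  - apply soft_a_T1_T2.
  - apply soft_a_T2_T1; exact hrefl.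
Qed.
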